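(* Let $M$ be a simple $L$-module and $m\ge 1$. Suppose $d^m\in\operatorname{ann}M$, $d^{m-1}\notin\operatorname{ann}M$, and $f(h)d^{m-1}M=0$ for some nonconstant polynomial $f\in\mathbb C[x]$. Then $M$ is finite-dimensional. The same holds with $d$ replaced by $u$. In particular, if $d^m\in\operatorname{ann}M$, $d^{m-1}\notin\operatorname{ann}M$ and $d^mu-s^mud^m\neq 0$ in $L$, then $M$ is finite-dimensional; likewise if $u^m\in\operatorname{ann}M$, $u^{m-1}\notin\operatorname{ann}M$ and $du^m-s^mu^md\neq 0$ in $L$.
   Context: Let $r,s,\gamma\in\mathbb C$ with $rs\neq 0$ and $\phi\in\mathbb C[x]$. The generalized down-up algebra $L=L(\phi,r,s,\gamma)$ is the associative $\mathbb C$-algebra generated by $u,d,h$ subject to $hu-ruh=\gamma u$, $dh-rhd=\gamma d$, $du-sud=\phi(h)$; it is a domain with basis $\{u^ih^jd^k\}$. Modules are left modules; $\operatorname{ann}M$ is the annihilator of $M$ in $L$ (with $d^0=u^0=1$). *)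

From HB Require Import structures.
From mathcomp Require Import all_boot all_order all_algebra.
Set Implicit Arguments. Unset Strict Implicit. Unset Printing Implicit Defensive.
Import Order.TTheory GRing.Theory Num.Theory.
Local Open Scope ring_scope.

Section LMod.
Variables (F : fieldType) (V : lmodType F).

Definition lin_op (T : V -> V) : Prop :=
  forall (a : F) (x y : V), T (a *: x + y) = a *: T x + T y.

Definition peval (p : {poly F}) (T : V -> V) (v : V) : V :=
  \sum_(i < size p) p`_i *: iter i T v.

(* (U, D, H) defines a left L(phi, r, s, g)-module structure on V, where
   u, d, h act by U, D, H respectively. *)
Definition is_Lmod (phi : {poly F}) (r s g : F) (U D H : V -> V) : Prop :=
  [/\ lin_op U, lin_op D & lin_op H] /\
  [/\ forall v, H (U v) - r *: U (H v) = g *: U v,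
       forall v, D (H v) - r *: H (D v) = g *: D v &
       forall v, D (U v) - s *: U (D v) = peval phi H v].

Definition is_submod (U D H : V -> V) (W : V -> Prop) : Prop :=
  [/\ W 0, forall a x y, W x -> W y -> W (a *: x + y),
      forall x, W x -> W (U x), forall x, W x -> W (D x) &
      forall x, W x -> W (H x)].

Definition simple_Lmod (U D H : V -> V) : Prop :=
  (exists v : V, v != 0) /\
  forall W, is_submod U D H W -> (exists w, W w /\ w != 0) -> forall v, W v.

Definition findim : Prop :=
  exists s : seq V, forall v : V,
    exists c : 'I_(size s) -> F, v = \sum_(i < size s) c i *: s`_i.

End LMod.

(* An element X of L is nonzero iff it acts nonzero on some L-module
   (the regular module is faithful). [Lelem_nonzero phi r s g X] says that
   the element given by the operator expression X(U,D,H) is nonzero in L. *)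
Definition Lelem_nonzero (F : fieldType) (phi : {poly F}) (r s g : F)
  (X : forall V : lmodType F, (V -> V) -> (V -> V) -> (V -> V) -> V -> V) : Prop :=
  exists (W : lmodType F) (U D H : W -> W),
    is_Lmod phi r s g U D H /\ exists w : W, X W U D H w != 0.

From HB Require Import structures.
From mathcomp Require Import all_boot all_order all_algebra.
Import GRing.Theory.
Local Open Scope ring_scope.
Set Implicit Arguments. Unset Strict Implicit.

(* Let [w] be a lowest weight vector: an [h]-eigenvector killed by the lowering
   operator [B] ([d], or [u] for the second statement).  One exists because
   [B^(m-1) V] is nonzero, [h]-stable and killed by [f(h)] with [f != 0], so it
   contains an eigenvector over the algebraically closed field, which [B^m = 0]
   sends to zero.  The vectors [A^j w] are [h]-eigenvectors and
   [B A^(j+1) w] is a multiple of [A^j w]; since [B^m A^m w], a multiple of [w],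
   vanishes, [B A^k w = 0] for some [k > 0].  The span of the [A^j w], [j >= k],
   is then a submodule, so by simplicity it contains [w]; the resulting relation
   makes some [A^K w] a combination of the [A^j w], [j < K], whose span is thus a
   finite-dimensional submodule, i.e. [V].
   For the last two statements, [d^m u - s^m u d^m = f(h) d^(m-1)] in [L] for an
   explicit [f], which is nonzero because the element is, while [f(h) d^(m-1)]
   kills [M] because [d^m] does. *)

Section LinearOperator.
Variables (F : fieldType) (V : lmodType F).
Implicit Types (T S : V -> V) (p q : {poly F}).

Lemma lin_op0 T : lin_op T -> T 0 = 0.
Proof.
move=> hT; have := hT 1 0 0; rewrite scaler0 addr0 scale1r => e.
by apply: (@addrI _ (T 0)); rewrite addr0 -e.
Qed.

Lemma lin_opZ T a x : lin_op T -> T (a *: x) = a *: T x.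
Proof. by move=> hT; have := hT a x 0; rewrite !addr0 (lin_op0 hT) addr0. Qed.

Lemma lin_opD T x y : lin_op T -> T (x + y) = T x + T y.
Proof. by move=> hT; have := hT 1 x y; rewrite !scale1r. Qed.

Lemma lin_opB T x y : lin_op T -> T (x - y) = T x - T y.
Proof. by move=> hT; rewrite lin_opD // -scaleN1r lin_opZ // scaleN1r. Qed.

Lemma lin_op_sum T n (G : 'I_n -> V) : lin_op T ->
  T (\sum_(i < n) G i) = \sum_(i < n) T (G i).
Proof. by move=> hT; apply: (big_morph T (fun x y => lin_opD x y hT) (lin_op0 hT)). Qed.

Lemma lin_op_iter T n : lin_op T -> lin_op (iter n T).
Proof. by move=> hT; elim: n => [//|n IH] a x y; rewrite !iterS IH hT. Qed.

Lemma peval_widen p T v n : (size p <= n)%N ->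
  peval p T v = \sum_(i < n) p`_i *: iter i T v.
Proof.
move=> hn; rewrite /peval (big_ord_widen n (fun i => p`_i *: iter i T v) hn).
rewrite big_mkcond /=; apply: eq_bigr => i _; case: ifPn => // /negbTE.
by rewrite ltnNge => /negbFE hi; rewrite nth_default // scale0r.
Qed.

Lemma peval0 T v : peval 0 T v = 0.
Proof. by rewrite /peval size_poly0 big_ord0. Qed.

Lemma peval_comb a p q T v :
  peval (a *: p + q) T v = a *: peval p T v + peval q T v.
Proof.
set n := maxn (size p) (size q).
have hn : (size (a *: p + q)%R <= n)%N.
  apply: leq_trans (size_polyD _ _) _.
  by rewrite geq_max (leq_trans (size_scale_leq _ _) (leq_maxl _ _)) leq_maxr.
rewrite (peval_widen T v hn) (peval_widen T v (leq_maxl (size p) (size q))).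
rewrite (peval_widen T v (leq_maxr (size p) (size q))) scaler_sumr -big_split.
by apply: eq_bigr => i _; rewrite coefD coefZ scalerDl scalerA.
Qed.

Lemma pevalD p q T v : peval (p + q) T v = peval p T v + peval q T v.
Proof. by have := peval_comb 1 p q T v; rewrite !scale1r. Qed.

Lemma pevalZ a p T v : peval (a *: p) T v = a *: peval p T v.
Proof. by have := peval_comb a p 0 T v; rewrite !addr0 peval0 addr0. Qed.

Lemma pevalC c T v : peval c%:P T v = c *: v.
Proof. by rewrite (peval_widen T v (size_polyC_leq1 c)) big_ord1 coefC. Qed.

Lemma peval_mulX p T v : peval (p * 'X) T v = peval p T (T v).
Proof.
have hn : (size (p * 'X)%R <= (size p).+1)%N.
  by apply: leq_trans (size_polyMleq _ _) _; rewrite size_polyX addn2.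
rewrite (peval_widen T v hn) big_ord_recl coefMX /= scale0r add0r.
by apply: eq_bigr => i _; rewrite coefMX /= -iterS iterSr.
Qed.

Lemma pevalX T v : peval 'X T v = T v.
Proof. by rewrite -[X in peval X]mul1r peval_mulX pevalC scale1r. Qed.

Lemma peval_affine al be T v :
  peval (al *: 'X + be%:P) T v = al *: T v + be *: v.
Proof. by rewrite peval_comb pevalX pevalC. Qed.

Lemma peval_XsubC a T v : peval ('X - a%:P) T v = T v - a *: v.
Proof. by rewrite -polyCN -[X in peval (X + _)]scale1r peval_affine scale1r scaleNr. Qed.

Lemma peval_intertwine p T S H y : lin_op T ->
  (forall z, T (H z) = S (T z)) -> T (peval p H y) = peval p S (T y).
Proof.
move=> hT hTH; have iterTH n : T (iter n H y) = iter n S (T y).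
  by elim: n => [//|n IH]; rewrite !iterS hTH IH.
by rewrite /peval lin_op_sum //; apply: eq_bigr => i _; rewrite lin_opZ // iterTH.
Qed.

Lemma pevalM p q T v : lin_op T -> peval (p * q) T v = peval p T (peval q T v).
Proof.
move=> hT; elim/poly_ind: p v => [|p c IH] v; first by rewrite mul0r !peval0.
rewrite mulrDl mulrAC mul_polyC pevalD peval_mulX IH pevalZ pevalD pevalC.
by rewrite peval_mulX (@peval_intertwine q T T T).
Qed.

Lemma peval_comp p q T v : lin_op T ->
  peval (p \Po q) T v = peval p (peval q T) v.
Proof.
move=> hT; elim/poly_ind: p v => [|p c IH] v; first by rewrite comp_poly0 !peval0.
rewrite comp_polyD comp_polyM comp_polyX comp_polyC pevalD pevalM // IH.
by rewrite !pevalD peval_mulX !pevalC.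
Qed.

Lemma peval_intertwine_affine p al be T H y : lin_op T -> lin_op H ->
  (forall z, T (H z) = al *: H (T z) + be *: T z) ->
  T (peval p H y) = peval (p \Po (al *: 'X + be%:P)) H (T y).
Proof.
move=> hT hH hTH; rewrite peval_comp //; apply: peval_intertwine => // z.
by rewrite peval_affine hTH.
Qed.

Lemma peval_eigen p T x mu : lin_op T -> T x = mu *: x ->
  peval p T x = p.[mu] *: x.
Proof.
move=> hT hx; have iterx i : iter i T x = mu ^+ i *: x.
  by elim: i => [|i IH]; rewrite ?scale1r // iterS IH lin_opZ // hx scalerA exprSr.
rewrite /peval horner_coef scaler_suml.
by apply: eq_bigr => i _; rewrite iterx scalerA.
Qed.

End LinearOperator.

Section Span.
Variables (F : fieldType) (V : lmodType F).
Implicit Types (T : V -> V) (s : seq V).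

Definition span s (v : V) :=
  exists c : 'I_(size s) -> F, v = \sum_(i < size s) c i *: s`_i.

Lemma span0 s : span s 0.
Proof. by exists (fun _ => 0); rewrite big1 // => i _; rewrite scale0r. Qed.

Lemma span_comb s a x y : span s x -> span s y -> span s (a *: x + y).
Proof.
move=> [c1 ->] [c2 ->]; exists (fun i => a * c1 i + c2 i).
rewrite scaler_sumr -big_split; apply: eq_bigr => i _.
by rewrite scalerDl scalerA.
Qed.

Lemma spanD s x y : span s x -> span s y -> span s (x + y).
Proof. by move=> hx hy; have := span_comb 1 hx hy; rewrite scale1r. Qed.

Lemma spanZ s a x : span s x -> span s (a *: x).
Proof. by move=> hx; have := span_comb a hx (span0 s); rewrite addr0. Qed.

Lemma spanB s x y : span s x -> span s y -> span s (x - y).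
Proof. by move=> hx hy; have := span_comb (-1) hy hx; rewrite scaleN1r addrC. Qed.

Lemma span_sum s n (G : 'I_n -> V) : (forall i, span s (G i)) -> span s (\sum_(i < n) G i).
Proof. by move=> hG; apply: (big_ind (span s)) => //; [exact: span0 | exact: spanD]. Qed.

Lemma span_nth s i : (i < size s)%N -> span s s`_i.
Proof.
move=> hi; exists (fun j => (val j == i)%:R).
rewrite (bigD1 (Ordinal hi)) //= eqxx scale1r big1 ?addr0 // => j hj.
suff /negbTE -> : val j != i by rewrite scale0r.
by apply: contra hj => /eqP hji; apply/eqP/val_inj.
Qed.

Lemma span_lin T s s' v : lin_op T ->
  (forall i, (i < size s)%N -> span s' (T s`_i)) -> span s v -> span s' (T v).
Proof.
move=> hT hs [c ->]; rewrite lin_op_sum //; apply: span_sum => i.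
by rewrite lin_opZ //; apply/spanZ/hs.
Qed.

Definition krylov T (x : V) n := mkseq (fun j => iter j T x) n.

Lemma span_krylov_lin T T' x n n' v : lin_op T' ->
  (forall j, (j < n)%N -> span (krylov T x n') (T' (iter j T x))) ->
  span (krylov T x n) v -> span (krylov T x n') (T' v).
Proof.
move=> hT' hj; apply: span_lin => // i; rewrite size_mkseq => hi.
by rewrite nth_mkseq //; apply: hj.
Qed.

Lemma krylov_mem T x n j : (j < n)%N -> span (krylov T x n) (iter j T x).
Proof.
by move=> hj; have := @span_nth (krylov T x n) j; rewrite size_mkseq nth_mkseq //; apply.
Qed.

Lemma span_krylov_widen T x n n' v : (n <= n')%N ->
  span (krylov T x n) v -> span (krylov T x n') v.
Proof.
move=> hn; apply: (@span_krylov_lin T id) => // j hj.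
exact/krylov_mem/(leq_trans hj hn).
Qed.

Lemma span_krylovS T x n v : lin_op T ->
  span (krylov T x n) v -> span (krylov T x n.+1) (T v).
Proof. by move=> hT; apply: span_krylov_lin => // j hj; rewrite -iterS; apply: krylov_mem. Qed.

Lemma span_krylov_invariant T x n v : lin_op T ->
  span (krylov T x n) (iter n T x) -> span (krylov T x n) v -> span (krylov T x n) (T v).
Proof.
move=> hT hn; apply: span_krylov_lin => // j; rewrite -iterS leq_eqVlt.
by case/orP=> [/eqP -> // | hjn]; apply: krylov_mem.
Qed.

(* Solve the relation [x = sum_i c_i T^(i+k) x] for its last nonzero term. *)
Lemma krylov_dependent T x k n : x != 0 -> (0 < k)%N ->
  span (krylov T (iter k T x) n) x -> exists2 K, (0 < K)%N & span (krylov T x K) (iter K T x).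
Proof.
move=> xn0 hk [c hx].
suff aux m (d : 'I_m -> F) : x = \sum_(i < m) d i *: iter (i + k) T x ->
    exists2 K, (0 < K)%N & span (krylov T x K) (iter K T x).
  apply: (aux _ c); rewrite [LHS]hx; apply: eq_bigr => i _.
  by rewrite nth_mkseq ?iterD //; apply: leq_trans (ltn_ord i) _; rewrite size_mkseq.
have Kgt0 j : (0 < j + k)%N by rewrite addn_gt0 hk orbT.
elim: m d => [|m IH] d; first by rewrite big_ord0 => hx0; move: xn0; rewrite hx0 eqxx.
rewrite big_ord_recr /=; have [dm0 | dmn0] := eqVneq (d ord_max) 0.
  by rewrite dm0 scale0r addr0; apply: IH.
move=> hd; exists (m + k)%N => //.
have -> : iter (m + k) T x =
    (d ord_max)^-1 *: (x - \sum_(i < m) d (widen_ord (leqnSn m) i) *: iter (i + k) T x).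
  by rewrite [X in X - _]hd addrAC subrr add0r scalerA mulVf // scale1r.
apply/spanZ/spanB; first exact: (krylov_mem T x (Kgt0 m)).
by apply: span_sum => i; apply/spanZ/krylov_mem; rewrite ltn_add2r.
Qed.

End Span.

Section LowestWeightVector.
Variables (F : fieldType) (V : lmodType F) (A B H : V -> V) (phi : {poly F}) (a1 b1 a3 : F).
Hypotheses (hA : lin_op A) (hB : lin_op B) (hH : lin_op H).
Hypothesis HA : forall z, H (A z) = A (a1 *: H z + b1 *: z).
Hypothesis BA : forall z, B (A z) = a3 *: A (B z) + peval phi H z.
Variables (w : V) (lam : F).
Hypotheses (Bw : B w = 0) (Hw : H w = lam *: w).

Definition weight j := iter j (fun mu => a1 * mu + b1) lam.

Fixpoint lowering_coef j :=
  if j is j'.+1 then a3 * lowering_coef j' + phi.[weight j] else phi.[lam].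

Lemma H_raise j : H (iter j A w) = weight j *: iter j A w.
Proof. by elim: j => [//|j IH]; rewrite iterS HA IH scalerA -scalerDl lin_opZ. Qed.

Lemma B_raise j : B (iter j.+1 A w) = lowering_coef j *: iter j A w.
Proof.
elim: j => [|j IH].
  by rewrite /= BA Bw lin_op0 // scaler0 add0r (peval_eigen _ hH Hw).
rewrite [iter j.+2 A w]iterS BA IH lin_opZ // (peval_eigen _ hH (H_raise j.+1)).
by rewrite scalerA -scalerDl.
Qed.

Lemma iter_B_raise j n :
  iter j B (iter (j + n) A w) = (\prod_(n <= i < j + n) lowering_coef i) *: iter n A w.
Proof.
elim: j => [|j IH]; first by rewrite big_geq // scale1r.
rewrite addSn iterSr B_raise (lin_opZ _ _ (lin_op_iter j hB)) IH scalerA.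
by rewrite big_nat_recr ?leq_addl //= mulrC.
Qed.

Lemma exists_raise_killed m : w != 0 -> (forall v, iter m B v = 0) ->
  exists2 k, (0 < k)%N & B (iter k A w) = 0.
Proof.
move=> wn0 hm; have := iter_B_raise m 0; rewrite addn0 hm => /esym/eqP.
rewrite scaler_eq0 (negbTE wn0) orbF prodf_seq_eq0 => /hasP[i].
by rewrite mem_index_iota => /andP[_ _] /eqP ci0; exists i.+1; rewrite // B_raise ci0 scale0r.
Qed.

Lemma span_krylov_H k n v :
  span (krylov A (iter k A w) n) v -> span (krylov A (iter k A w) n) (H v).
Proof.
move=> hv; apply: (span_krylov_lin hH _ hv) => j hj.
by rewrite -iterD H_raise; apply: spanZ; rewrite iterD; apply: krylov_mem.
Qed.

Lemma span_krylov_B k n v : B (iter k A w) = 0 ->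
  span (krylov A (iter k A w) n) v -> span (krylov A (iter k A w) n) (B v).
Proof.
move=> Bk hv; apply: (span_krylov_lin hB _ hv) => -[_|j hj]; first by rewrite Bk; apply: span0.
by rewrite -iterD addSn B_raise iterD; apply/spanZ/krylov_mem/ltnW.
Qed.

Hypotheses (wn0 : w != 0) (hsimple : simple_Lmod A B H).

Lemma findim_of_krylov_closed K : (0 < K)%N ->
  span (krylov A w K) (iter K A w) -> findim V.
Proof.
move=> hK hKw; have [_ hS] := hsimple.
suff hall : forall v, span (krylov A w K) v by exists (krylov A w K).
apply: hS; last by exists w; split => //; apply: (krylov_mem A w hK).
split => [|a x y|x|x|x]; [exact: span0 | exact: span_comb | | |].
- exact: span_krylov_invariant.
- exact: (@span_krylov_B 0%N).
- exact: (@span_krylov_H 0%N).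
Qed.

Lemma findim_of_lowest_weight m : (forall v, iter m B v = 0) -> findim V.
Proof.
move=> hm; have [k hk Bk] := exists_raise_killed wn0 hm.
have [Ak0 | Akn0] := eqVneq (iter k A w) 0.
  by apply: (findim_of_krylov_closed hk); rewrite Ak0; apply: span0.
have [_ hS] := hsimple.
pose W v := exists n, span (krylov A (iter k A w) n) v.
have Wsub : is_submod A B H W.
  split => [|a x y [n1 h1] [n2 h2]|x [n hx]|x [n hx]|x [n hx]].
  - by exists 0%N; apply: span0.
  - exists (maxn n1 n2); apply: span_comb.
      exact: span_krylov_widen (leq_maxl _ _) h1.
    exact: span_krylov_widen (leq_maxr _ _) h2.
  - by exists n.+1; apply: span_krylovS.
  - by exists n; apply: span_krylov_B.
  - by exists n; apply: span_krylov_H.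
have [n hn] : W w.
  apply: hS Wsub _ w; exists (iter k A w); split => //.
  by exists 1%N; apply: (krylov_mem A _ (ltnSn 0)).
have [K hK hKw] := krylov_dependent wn0 hk hn.
exact: findim_of_krylov_closed hK hKw.
Qed.

End LowestWeightVector.

Section NilpotentLowering.
Variables (F : closedFieldType) (V : lmodType F).

Lemma exists_eigenvector (N : V -> Prop) (H : V -> V) (p : {poly F}) x :
  lin_op H -> (forall a y, N y -> N (H y - a *: y)) -> p != 0 ->
  N x -> x != 0 -> peval p H x = 0 -> exists w lam, [/\ N w, w != 0 & H w = lam *: w].
Proof.
move=> hH hN pn0; have [rs ->] := closed_field_poly_normal p.
move=> + + /eqP; rewrite pevalZ scaler_eq0 lead_coef_eq0 (negbTE pn0) /=.
elim: rs x => [|a rs IH] x Nx xn0; first by rewrite big_nil pevalC scale1r (negbTE xn0).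
rewrite big_cons mulrC pevalM // peval_XsubC.
have [e | ne] := eqVneq (H x - a *: x) 0.
  by move=> _; exists x, a; split => //; apply/eqP; rewrite -subr_eq0 e.
exact: IH (hN a x Nx) ne.
Qed.

Variables (A B H : V -> V) (phi : {poly F}) (a1 b1 a2 b2 a3 : F).
Hypotheses (hA : lin_op A) (hB : lin_op B) (hH : lin_op H).
Hypothesis HA : forall z, H (A z) = A (a1 *: H z + b1 *: z).
Hypothesis HB : forall z, H (B z) = B (a2 *: H z + b2 *: z).
Hypothesis BA : forall z, B (A z) = a3 *: A (B z) + peval phi H z.
Hypothesis hsimple : simple_Lmod A B H.

Lemma H_iter_lowering n v : exists y, H (iter n B v) = iter n B y.
Proof.
elim: n v => [|n IH] v; first by exists (H v).
have [y hy] := IH v; exists (a2 *: y + b2 *: v).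
by rewrite iterS HB hy [RHS]iterS (lin_op_iter n hB) (lin_opZ _ _ (lin_op_iter n hB)).
Qed.

Lemma findim_of_nilpotent_lowering m (f : {poly F}) : (1 <= m)%N ->
  (forall v, iter m B v = 0) -> (exists v, iter m.-1 B v != 0) -> f != 0 ->
  (forall v, peval f H (iter m.-1 B v) = 0) -> findim V.
Proof.
move=> hm hmB [v0 hv0] fn0 hf.
pose N x := exists v, x = iter m.-1 B v.
have hN a x : N x -> N (H x - a *: x).
  move=> [v ->]; have [y ->] := H_iter_lowering m.-1 v; exists (y - a *: v).
  by rewrite (lin_opB _ _ (lin_op_iter _ hB)) (lin_opZ _ _ (lin_op_iter _ hB)).
have [w [lam [[v wE] wn0 Hw]]] :=
  exists_eigenvector hH hN fn0 (ex_intro _ v0 erefl) hv0 (hf v0).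
have Bw : B w = 0 by rewrite wE -iterS prednK.
exact: (findim_of_lowest_weight hA hB hH HA BA Bw Hw wn0 hsimple hmB).
Qed.

End NilpotentLowering.

Section LModule.
Variables (F : fieldType) (phi : {poly F}) (r s g : F).

(* [commDnU_poly m] and [commDUn_poly m] are the [f] with
   [d^(m+1) u - s^(m+1) u d^(m+1) = f(h) d^m] and
   [d u^(m+1) - s^(m+1) u^(m+1) d = f(h) u^m]; the recursions come from
   [d q(h) = q(r h + g) d] and [u q(h) = q((h - g) / r) u]. *)
Fixpoint commDnU_poly m : {poly F} :=
  if m is m'.+1 then s ^+ m *: phi + (commDnU_poly m' \Po (r *: 'X + g%:P)) else phi.

Fixpoint commDUn_poly m : {poly F} :=
  if m is m'.+1 then s *: (commDUn_poly m' \Po (r^-1 *: 'X + (- (r^-1 * g))%:P)) + phi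
  else phi.

Lemma Lelem_nonzero_peval X (f : {poly F}) :
  Lelem_nonzero phi r s g X ->
  (forall (W : lmodType F) (U D H : W -> W), is_Lmod phi r s g U D H ->
     forall w, exists y, X W U D H w = peval f H y) -> f != 0.
Proof.
move=> [W [U [D [H [hL [w hw]]]]]] hX; apply: contraNneq hw => f0.
by have [y ->] := hX W U D H hL w; rewrite f0 peval0.
Qed.

Variables (V : lmodType F) (U D H : V -> V).
Hypothesis hL : is_Lmod phi r s g U D H.

Lemma Lmod_linU : lin_op U. Proof. by case: hL => -[]. Qed.
Lemma Lmod_linD : lin_op D. Proof. by case: hL => -[]. Qed.
Lemma Lmod_linH : lin_op H. Proof. by case: hL => -[]. Qed.

Lemma Lmod_HU z : H (U z) = U (r *: H z + g *: z).
Proof.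
have [_ [hHU _ _]] := hL.
by rewrite (lin_opD _ _ Lmod_linU) !(lin_opZ _ _ Lmod_linU) -hHU addrC subrK.
Qed.

Lemma Lmod_DH z : D (H z) = r *: H (D z) + g *: D z.
Proof. by have [_ [_ hDH _]] := hL; rewrite -hDH addrC subrK. Qed.

Lemma Lmod_DU z : D (U z) = s *: U (D z) + peval phi H z.
Proof. by have [_ [_ _ hDU]] := hL; rewrite -hDU addrC subrK. Qed.

Lemma Lmod_UH z : r != 0 -> U (H z) = r^-1 *: H (U z) + (- (r^-1 * g)) *: U z.
Proof.
move=> rn0; apply: (scalerI rn0).
rewrite scalerDr !scalerA mulfV // scale1r mulrN mulrA mulfV // mul1r scaleNr.
by rewrite Lmod_HU (lin_opD _ _ Lmod_linU) !(lin_opZ _ _ Lmod_linU) addrK.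
Qed.

Lemma Lmod_HD z : r != 0 -> H (D z) = D (r^-1 *: H z + (- (r^-1 * g)) *: z).
Proof.
move=> rn0; rewrite (lin_opD _ _ Lmod_linD) !(lin_opZ _ _ Lmod_linD) Lmod_DH scalerDr !scalerA.
by rewrite mulVf // scale1r scaleNr addrK.
Qed.

Lemma Lmod_UD z : s != 0 -> U (D z) = s^-1 *: D (U z) + peval (- s^-1 *: phi) H z.
Proof.
move=> sn0; rewrite Lmod_DU pevalZ scalerDr scalerA mulVf // scale1r.
by rewrite scaleNr addrK.
Qed.

Lemma commDnU m w :
  iter m.+1 D (U w) - s ^+ m.+1 *: U (iter m.+1 D w) = peval (commDnU_poly m) H (iter m D w).
Proof.
elim: m w => [|m IH] w; first by rewrite expr1 /= Lmod_DU addrC addKr.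
move/eqP: (IH w); rewrite subr_eq => /eqP DmU.
rewrite iterS DmU (lin_opD _ _ Lmod_linD) !(lin_opZ _ _ Lmod_linD).
rewrite (peval_intertwine_affine _ _ Lmod_linD Lmod_linH Lmod_DH) Lmod_DU.
rewrite [commDnU_poly m.+1]/= pevalD pevalZ -!iterS scalerDr scalerA -exprSr.
by rewrite addrA addrAC addrK addrC.
Qed.

Lemma commDUn m w : r != 0 ->
  D (iter m.+1 U w) - s ^+ m.+1 *: iter m.+1 U (D w) = peval (commDUn_poly m) H (iter m U w).
Proof.
move=> rn0; elim: m w => [|m IH] w; first by rewrite expr1 /= Lmod_DU addrC addKr.
move/eqP: (IH w); rewrite subr_eq => /eqP DUm.
rewrite [iter m.+2 U w]iterS Lmod_DU DUm (lin_opD _ _ Lmod_linU) !(lin_opZ _ _ Lmod_linU).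
rewrite (peval_intertwine_affine _ _ Lmod_linU Lmod_linH (Lmod_UH ^~ rn0)).
rewrite [commDUn_poly m.+1]/= pevalD pevalZ -[U (iter m.+1 U (D w))]iterS scalerDr scalerA -exprS.
by rewrite addrAC addrK.
Qed.

End LModule.

Lemma simple_Lmod_swap (F : fieldType) (V : lmodType F) (U D H : V -> V) :
  simple_Lmod U D H -> simple_Lmod D U H.
Proof. by move=> [ne hS]; split=> // W [W0 Wcomb WD WU WH]; apply: hS. Qed.

Section FiniteDimensional.
Variables (F : closedFieldType) (phi : {poly F}) (r s g : F).
Hypotheses (rn0 : r != 0) (sn0 : s != 0).
Variables (V : lmodType F) (U D H : V -> V).
Hypotheses (hL : is_Lmod phi r s g U D H) (hS : simple_Lmod U D H).

Lemma findim_nilpotent_d m (f : {poly F}) : (1 <= m)%N ->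
  (forall v, iter m D v = 0) -> (exists v, iter m.-1 D v != 0) -> f != 0 ->
  (forall v, peval f H (iter m.-1 D v) = 0) -> findim V.
Proof.
exact: (findim_of_nilpotent_lowering (Lmod_linU hL) (Lmod_linD hL) (Lmod_linH hL)
  (Lmod_HU hL) (Lmod_HD hL ^~ rn0) (Lmod_DU hL) hS).
Qed.

Lemma findim_nilpotent_u m (f : {poly F}) : (1 <= m)%N ->
  (forall v, iter m U v = 0) -> (exists v, iter m.-1 U v != 0) -> f != 0 ->
  (forall v, peval f H (iter m.-1 U v) = 0) -> findim V.
Proof.
exact: (findim_of_nilpotent_lowering (Lmod_linD hL) (Lmod_linU hL) (Lmod_linH hL)
  (Lmod_HD hL ^~ rn0) (Lmod_HU hL) (Lmod_UD hL ^~ sn0) (simple_Lmod_swap hS)).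
Qed.

Lemma findim_commDnU m : (1 <= m)%N ->
  (forall v, iter m D v = 0) -> (exists v, iter m.-1 D v != 0) ->
  Lelem_nonzero phi r s g (fun W U' D' H' w => iter m D' (U' w) - s ^+ m *: U' (iter m D' w)) ->
  findim V.
Proof.
case: m => [//|m] _ hmD hnz hX.
apply: (findim_nilpotent_d _ hmD hnz (f := commDnU_poly phi r s g m)) => // [|v].
  by apply: (Lelem_nonzero_peval hX) => W U' D' H' hL' w; exists (iter m D' w); apply: commDnU.
by rewrite -(commDnU hL) !hmD (lin_op0 (Lmod_linU hL)) scaler0 subr0.
Qed.

Lemma findim_commDUn m : (1 <= m)%N ->
  (forall v, iter m U v = 0) -> (exists v, iter m.-1 U v != 0) ->
  Lelem_nonzero phi r s g (fun W U' D' H' w => D' (iter m U' w) - s ^+ m *: iter m U' (D' w)) ->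
  findim V.
Proof.
case: m => [//|m] _ hmU hnz hX.
apply: (findim_nilpotent_u _ hmU hnz (f := commDUn_poly phi r s g m)) => // [|v].
  by apply: (Lelem_nonzero_peval hX) => W U' D' H' hL' w; exists (iter m U' w); apply: commDUn.
by rewrite -(commDUn hL) // !hmU (lin_op0 (Lmod_linD hL)) scaler0 subr0.
Qed.

End FiniteDimensional.

Theorem mainTheorem4 (F : closedFieldType) (charF0 : [pchar F] =i pred0)
  (phi : {poly F}) (r s g : F) (hrs : r * s != 0) :
  (forall (V : lmodType F) (U D H : V -> V) (m : nat) (f : {poly F}),
     is_Lmod phi r s g U D H -> simple_Lmod U D H -> (1 <= m)%N ->
     (forall v, iter m D v = 0) -> (exists v, iter m.-1 D v != 0) ->
     (1 < size f)%N -> (forall v, peval f H (iter m.-1 D v) = 0) ->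
     findim V) /\
  (forall (V : lmodType F) (U D H : V -> V) (m : nat) (f : {poly F}),
     is_Lmod phi r s g U D H -> simple_Lmod U D H -> (1 <= m)%N ->
     (forall v, iter m U v = 0) -> (exists v, iter m.-1 U v != 0) ->
     (1 < size f)%N -> (forall v, peval f H (iter m.-1 U v) = 0) ->
     findim V) /\
  (forall (V : lmodType F) (U D H : V -> V) (m : nat),
     is_Lmod phi r s g U D H -> simple_Lmod U D H -> (1 <= m)%N ->
     (forall v, iter m D v = 0) -> (exists v, iter m.-1 D v != 0) ->
     Lelem_nonzero phi r s g
       (fun W U' D' H' w => iter m D' (U' w) - s ^+ m *: U' (iter m D' w)) ->
     findim V) /\
  (forall (V : lmodType F) (U D H : V -> V) (m : nat),
     is_Lmod phi r s g U D H -> simple_Lmod U D H -> (1 <= m)%N ->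
     (forall v, iter m U v = 0) -> (exists v, iter m.-1 U v != 0) ->
     Lelem_nonzero phi r s g
       (fun W U' D' H' w => D' (iter m U' w) - s ^+ m *: iter m U' (D' w)) ->
     findim V).
Proof.
have [rn0 sn0] : r != 0 /\ s != 0 by apply/andP; rewrite -negb_or -mulf_eq0.
have poly_neq0 (f : {poly F}) : (1 < size f)%N -> f != 0.
  by move=> hf; rewrite -size_poly_eq0 -lt0n (ltn_trans _ hf).
split; [|split; [|split]] => V U D H m.
- by move=> f hL hS hm hmD hnz /poly_neq0; exact: (findim_nilpotent_d rn0 hL hS).
- by move=> f hL hS hm hmU hnz /poly_neq0; exact: (findim_nilpotent_u rn0 sn0 hL hS).
- by move=> hL hS; apply: (findim_commDnU rn0 hL hS).
- by move=> hL hS; apply: (findim_commDUn rn0 sn0 hL hS).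
Qed.
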